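(* Let $\mathcal{C}$ be a $q$-ary cyclic code of length $n$ and let $\mathcal{L}$ be a cyclic code of length $n_\ell$ and minimum distance $d_\ell$ over $\mathbb{F}_{q_\ell}=\mathbb{F}_{q^u}$, with $\gcd(n,n_\ell)=1$, which is a non-zero-locator code of $\mathcal{C}$ with integers $\mu$ and $e$ (with respect to $\alpha$ of order $n$ in $\mathbb{F}_{q^s}$ and $\beta$ of order $n_\ell$ in $\mathbb{F}_{q^{us_\ell}}$; let $r=\mathrm{lcm}(s,us_\ell)$). Let $a(x)=\sum_{j\in\mathcal{Z}}a_jx^j\in\mathcal{L}$ be a codeword with support $\mathcal{Z}$, $|\mathcal{Z}|=d_\ell$, and define $f(x)=\prod_{j\in\mathcal{Z}}(1-x\beta^j)$ and $h(x)=\sum_{j\in\mathcal{Z}}a_j\prod_{\ell\in\mathcal{Z},\ell\ne j}(1-x\beta^\ell)$. Fix $\kappa\in\mathcal{Z}$ and put $\gamma_i=\beta^{-\kappa}\alpha^{-i}$ for $i=0,\dots,n-1$. Let $\mathcal{E}\subseteq\{0,\dots,n-1\}$ be a set of error positions and $e_i\in\mathbb{F}_q$, $i\in\mathcal{E}$, the error values, and define $$\Lambda(x)=\prod_{i\in\mathcal{E}}f(x\alpha^i),\qquad \Omega(x)=\sum_{i\in\mathcal{E}}\Big(e_i\alpha^{ie}h(x\alpha^i)\prod_{\ell\in\mathcal{E},\ell\ne i}f(x\alpha^\ell)\Big)$$ in $\mathbb{F}_{q^r}[x]$. Then for every $i\in\mathcal{E}$, $$e_i=\frac{\Omega(\gamma_i)}{\alpha^{ie}\,h(\gamma_i\alpha^i)\prod_{\ell\in\mathcal{E},\ell\ne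 i}f(\gamma_i\alpha^\ell)}=\frac{\Omega(\gamma_i)\,\alpha^{i}\,f'(\gamma_i\alpha^i)}{\Lambda'(\gamma_i)\,\alpha^{ie}\,h(\gamma_i\alpha^i)},$$ where $f'$ and $\Lambda'$ denote formal derivatives.
   Context: A $q$-ary cyclic code of length $n$ ($\gcd(n,q)=1$) is an ideal of $\mathbb{F}_q[x]/(x^n-1)$, codewords identified with polynomials of degree $<n$. Non-zero-locator code: with $\mathcal{C}$, $\mathcal{L}$, $\alpha$, $\beta$ as in the claim, $\mathcal{L}$ is a non-zero-locator code of $\mathcal{C}$ if there exist an integer $\mu\ge 2$ and an integer $e$ such that for all $a(x)\in\mathcal{L}$ and all $c(x)\in\mathcal{C}$, $\sum_{j\ge0}c(\alpha^{j+e})a(\beta^j)x^j\equiv 0\pmod{x^{\mu-1}}$ as formal power series. *)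

From HB Require Import structures.
From mathcomp Require Import all_boot all_order all_algebra all_field.
Set Implicit Arguments. Unset Strict Implicit. Unset Printing Implicit Defensive.
Import Order.TTheory GRing.Theory.
Local Open Scope ring_scope.

(* A cyclic code of length n over the subfield of R described by [S]:
   a set of polynomials (codewords, degree < n) with coefficients in S,
   forming an S-subspace closed under multiplication by x modulo x^n - 1,
   i.e. an ideal of S[x]/(x^n - 1). *)
Definition cyclic_code (R : fieldType) (S : {pred R}) (n : nat)
  (C : pred {poly R}) : Prop :=
  [/\ forall c, C c -> (size c <= n)%N /\ (forall i, c`_i \in S),
      C 0,
      forall c d, C c -> C d -> C (c + d),
      forall k c, k \in S -> C c -> C (k *: c)
    & forall c, C c -> C (('X * c) %% ('X^n - 1))].

Definition weight (R : ringType) (c : {poly R}) : nat :=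
  count (fun x => x != 0) (polyseq c).

Definition min_distance (R : ringType) (C : pred {poly R}) (d : nat) : Prop :=
  (exists2 c, C c & c != 0 /\ weight c = d) /\
  (forall c, C c -> c != 0 -> (d <= weight c)%N).

(* L is a non-zero-locator code of C with integers mu and e
   (w.r.t. alpha and beta): for all a in L and c in C,
   sum_j c(alpha^(j+e)) a(beta^j) x^j = 0 mod x^(mu-1). *)
Definition nz_locator (F : fieldType) (K : fieldExtType F)
  (C : pred {poly F}) (L : pred {poly K}) (alpha beta : K)
  (mu : nat) (e : int) : Prop :=
  (2 <= mu)%N /\
  forall a c, L a -> C c -> forall j : nat, (j < mu.-1)%N ->
    (map_poly (in_alg K) c).[alpha ^ (j%:Z + e)] * a.[beta ^+ j] = 0.

Definition locf (K : fieldType) (nl : nat) (beta : K) (Z : {set 'I_nl})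
  : {poly K} := \prod_(j in Z) (1 - 'X * (beta ^+ j)%:P).

Definition loch (K : fieldType) (nl : nat) (beta : K) (a : {poly K})
  (Z : {set 'I_nl}) : {poly K} :=
  \sum_(j in Z) a`_j *: \prod_(l in Z | l != j) (1 - 'X * (beta ^+ l)%:P).

Definition scalex (K : fieldType) (p : {poly K}) (c : K) : {poly K} :=
  p \Po ('X * c%:P).

From HB Require Import structures.
From mathcomp Require Import all_boot all_order all_algebra all_field.
From mathcomp Require Import ring.
Set Implicit Arguments. Unset Strict Implicit. Unset Printing Implicit Defensive.
Import Order.TTheory GRing.Theory.
Local Open Scope ring_scope.

(* Forney's formula in locator form.  Let y := gamma_i.  Since
   y alpha^i = beta^-kappa is a root of f, the factor f(x alpha^i) of Lambda
   vanishes at y, so evaluating Omega at y kills every summand but the i-th,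
   and Lambda'(y) reduces to alpha^i f'(y alpha^i) times the other factors.
   All remaining factors 1 - y alpha^l beta^j are non-zero: beta^j alpha^l
   determines (j, l) because the orders n and n_l of alpha and beta are
   coprime, so both displayed quotients are well defined and equal e_i. *)

Section PolyEvaluation.

Variable K : fieldType.

Lemma horner_scalex (p : {poly K}) (c y : K) : (scalex p c).[y] = p.[y * c].
Proof. by rewrite /scalex horner_comp !hornerE. Qed.

Lemma horner_deriv_scalex (p : {poly K}) (c y : K) :
  ((scalex p c)^`()).[y] = c * (p^`()).[y * c].
Proof. by rewrite /scalex deriv_comp hornerM horner_comp !derivE !hornerE mulrC. Qed.

Lemma horner_deriv_prod_root (I : finType) (A : {set I}) (P : I -> {poly K})
    (i : I) (x : K) :
  i \in A -> (P i).[x] = 0 ->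
  ((\prod_(l in A) P l)^`()).[x] = (P i)^`().[x] * \prod_(l in A | l != i) (P l).[x].
Proof.
move=> iA Pix0; rewrite (bigD1 i) //= derivM hornerD !hornerM Pix0 mul0r addr0.
by rewrite horner_prod.
Qed.

Lemma horner_sum_prod_root (I : finType) (A : {set I}) (c : I -> K)
    (Q P : I -> {poly K}) (i : I) (x : K) :
  i \in A -> (P i).[x] = 0 ->
  (\sum_(j in A) c j *: (Q j * \prod_(l in A | l != j) P l)).[x] =
    c i * ((Q i).[x] * \prod_(l in A | l != i) (P l).[x]).
Proof.
move=> iA Pix0; rewrite horner_sum (bigD1 i) //= [X in _ + X]big1 ?addr0.
  by rewrite hornerZ hornerM horner_prod.
move=> j /andP[jA ji]; rewrite hornerZ hornerM horner_prod.
by rewrite (bigD1 i) /= ?Pix0 ?mul0r ?mulr0 // iA eq_sym.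
Qed.

End PolyEvaluation.

Lemma prim_root_neq0 (R : nzRingType) (n : nat) (z : R) :
  n.-primitive_root z -> z != 0.
Proof. by move=> z_prim; rewrite (prim_root_eq0 z_prim) -lt0n (prim_order_gt0 z_prim). Qed.

Lemma prim_root_expr_ord_inj (R : nzRingType) (n : nat) (z : R) :
  n.-primitive_root z -> injective (fun i : 'I_n => z ^+ i).
Proof.
move=> z_prim i j /eqP; rewrite (eq_prim_root_expr z_prim) !modn_small //.
by move=> /eqP; apply: val_inj.
Qed.

Section Locators.

Variables (K : fieldType) (nl : nat) (beta : K) (Z : {set 'I_nl}).

Lemma horner_locator_factor (c y : K) : (1 - 'X * c%:P).[y] = 1 - y * c.
Proof. by rewrite !hornerE. Qed.

Lemma horner_locf (y : K) :
  (locf beta Z).[y] = \prod_(j in Z) (1 - y * beta ^+ j).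
Proof. by rewrite horner_prod; under eq_bigr do rewrite horner_locator_factor. Qed.

Variable k : 'I_nl.
Hypotheses (beta_prim : nl.-primitive_root beta) (kZ : k \in Z).

Let beta_k_neq0 : beta ^+ k != 0.
Proof. by rewrite expf_neq0 ?(prim_root_neq0 beta_prim). Qed.

Let factor_k_root : 1 - (beta ^+ k)^-1 * beta ^+ k = 0.
Proof. by rewrite mulVf // subrr. Qed.

Let other_factors_neq0 :
  \prod_(j in Z | j != k) (1 - (beta ^+ k)^-1 * beta ^+ j) != 0.
Proof.
apply/prodf_neq0 => j /andP[_]; apply: contra_neq => /subr0_eq factor_j_root.
apply: (prim_root_expr_ord_inj beta_prim).
by rewrite /= -[RHS]mulr1 factor_j_root mulVKf.
Qed.

Lemma horner_locf_root : (locf beta Z).[(beta ^+ k)^-1] = 0.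
Proof. by rewrite horner_locf (bigD1 k) //= factor_k_root mul0r. Qed.

Lemma horner_deriv_locf_root :
  ((locf beta Z)^`()).[(beta ^+ k)^-1] =
    - beta ^+ k * \prod_(j in Z | j != k) (1 - (beta ^+ k)^-1 * beta ^+ j).
Proof.
rewrite /locf (horner_deriv_prod_root kZ); last by rewrite horner_locator_factor.
by rewrite !derivE !hornerE; under eq_bigr do rewrite horner_locator_factor.
Qed.

Lemma horner_loch_root (a : {poly K}) :
  (loch beta a Z).[(beta ^+ k)^-1] =
    a`_k * \prod_(j in Z | j != k) (1 - (beta ^+ k)^-1 * beta ^+ j).
Proof.
rewrite horner_sum (bigD1 k) //= [X in _ + X]big1 ?addr0 => [|j /andP[jZ jk]].
  by rewrite hornerZ horner_prod; under eq_bigr do rewrite horner_locator_factor.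
rewrite hornerZ horner_prod (bigD1 k) /= ?kZ 1?eq_sym //.
by rewrite horner_locator_factor factor_k_root mul0r mulr0.
Qed.

Lemma horner_deriv_locf_root_neq0 : ((locf beta Z)^`()).[(beta ^+ k)^-1] != 0.
Proof. by rewrite horner_deriv_locf_root mulf_neq0 // oppr_eq0. Qed.

Lemma horner_loch_root_neq0 (a : {poly K}) :
  a`_k != 0 -> (loch beta a Z).[(beta ^+ k)^-1] != 0.
Proof. by move=> ak_neq0; rewrite horner_loch_root mulf_neq0. Qed.

End Locators.

Lemma prim_root_expr_div_order (R : fieldType) (n : nat) (z : R) (i j : nat) :
  n.-primitive_root z -> (z ^+ i / z ^+ j) ^+ n = 1.
Proof.
move=> z_prim; rewrite exprMn exprVn -!exprM !(mulnC _ n) !exprM.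
by rewrite (prim_expr_order z_prim) !expr1n invr1 mulr1.
Qed.

Lemma expr_coprime_eq1 (R : nzRingType) (m n : nat) (x : R) :
  (0 < m)%N -> coprime m n -> x ^+ m = 1 -> x ^+ n = 1 -> x = 1.
Proof.
move=> m_gt0 /eqnP mn_coprime xm1 xn1.
have [d d_prim d_dvd_m] := prim_order_exists m_gt0 xm1.
have : (d %| gcdn m n)%N by rewrite dvdn_gcd d_dvd_m (prim_order_dvd d_prim) xn1 eqxx.
rewrite mn_coprime dvdn1 => /eqP d1.
by rewrite -[x]expr1 -d1 (prim_expr_order d_prim).
Qed.

Section CoprimeOrders.

Variables (K : fieldType) (n nl : nat) (alpha beta : K).
Hypotheses (alpha_prim : n.-primitive_root alpha)
           (beta_prim : nl.-primitive_root beta) (n_nl_coprime : coprime n nl).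

Lemma prim_root_expr_mul_inj (j k : 'I_nl) (l i : 'I_n) :
  beta ^+ j * alpha ^+ l = beta ^+ k * alpha ^+ i -> j = k /\ l = i.
Proof.
have alpha_neq0 := prim_root_neq0 alpha_prim.
have beta_neq0 := prim_root_neq0 beta_prim.
move=> eq_prod.
have eq_quot : beta ^+ j / beta ^+ k = alpha ^+ i / alpha ^+ l.
  by apply/eqP; rewrite eqr_div ?expf_neq0 // eq_prod mulrC.
have quot1 : beta ^+ j / beta ^+ k = 1.
  apply: (expr_coprime_eq1 (prim_order_gt0 alpha_prim) n_nl_coprime).
    by rewrite eq_quot prim_root_expr_div_order.
  exact: prim_root_expr_div_order.
have beta_eq : beta ^+ j = beta ^+ k := divr1_eq quot1.
have alpha_eq : alpha ^+ l = alpha ^+ i.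
  by apply: (mulfI (expf_neq0 k beta_neq0)); rewrite -{1}beta_eq eq_prod.
by split; [apply: (prim_root_expr_ord_inj beta_prim) |
           apply: (prim_root_expr_ord_inj alpha_prim)].
Qed.

Lemma one_sub_prim_root_neq0 (j k : 'I_nl) (l i : 'I_n) :
  (j != k) || (l != i) ->
  1 - (beta ^+ k)^-1 * (alpha ^+ i)^-1 * alpha ^+ l * beta ^+ j != 0.
Proof.
apply: contraTneq => /subr0_eq eq1.
have [-> ->] : j = k /\ l = i.
  apply: prim_root_expr_mul_inj; rewrite -[RHS]mulr1 eq1.
  by field; rewrite !expf_neq0 ?(prim_root_neq0 alpha_prim) ?(prim_root_neq0 beta_prim).
by rewrite !eqxx.
Qed.

Lemma horner_locf_prim_root_neq0 (Z : {set 'I_nl}) (k : 'I_nl) (l i : 'I_n) :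
  l != i -> (locf beta Z).[(beta ^+ k)^-1 * (alpha ^+ i)^-1 * alpha ^+ l] != 0.
Proof.
move=> l_neq_i; rewrite horner_locf; apply/prodf_neq0 => j _.
by rewrite one_sub_prim_root_neq0 // l_neq_i orbT.
Qed.

End CoprimeOrders.

Theorem proposition4
  (F : finFieldType) (K : fieldExtType F)
  (u s sl : nat) (El S T : {subfield K})
  (n nl dl : nat) (C : pred {poly F}) (L : pred {poly K})
  (alpha beta : K) (mu : nat) (e : int)
  (a : {poly K}) (Z : {set 'I_nl}) (kappa : 'I_nl)
  (Err : {set 'I_n}) (ev : 'I_n -> F) :
  (* F = F_q; El = F_{q^u}; S = F_{q^s}; T = F_{q^{u s_l}}; K = F_{q^r} *)
  \dim El = u -> \dim S = s -> \dim T = (u * sl)%N ->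
  \dim (fullv : {vspace K}) = lcmn s (u * sl) ->
  coprime n #|F| -> cyclic_code predT n C ->
  coprime nl (#|F| ^ u) -> cyclic_code [pred x | x \in El] nl L ->
  min_distance L dl ->
  coprime n nl ->
  alpha \in S -> n.-primitive_root alpha ->
  beta \in T -> nl.-primitive_root beta ->
  nz_locator C L alpha beta mu e ->
  L a -> Z = [set j : 'I_nl | a`_j != 0] -> #|Z| = dl ->
  kappa \in Z ->
  let f := locf beta Z in
  let h := loch beta a Z in
  let gamma := fun i : 'I_n => (beta ^+ kappa)^-1 * (alpha ^+ i)^-1 in
  let Lambda := \prod_(i in Err) scalex f (alpha ^+ i) in
  let Omega := \sum_(i in Err)
      ((in_alg K (ev i) * alpha ^ (i%:Z * e)) *: (scalex h (alpha ^+ i)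
        * \prod_(l in Err | l != i) scalex f (alpha ^+ l))) in
  forall i, i \in Err ->
    in_alg K (ev i) =
      Omega.[gamma i] /
      (alpha ^ (i%:Z * e) * h.[gamma i * alpha ^+ i]
        * \prod_(l in Err | l != i) f.[gamma i * alpha ^+ l])
    /\
    in_alg K (ev i) =
      Omega.[gamma i] * alpha ^+ i * (f^`()).[gamma i * alpha ^+ i] /
      ((Lambda^`()).[gamma i] * alpha ^ (i%:Z * e) * h.[gamma i * alpha ^+ i]).
Proof.
move=> _ _ _ _ _ _ _ _ _ n_nl_coprime _ alpha_prim _ beta_prim _ _ Z_supp _ kappaZ.
move=> f h gamma Lambda Omega i iErr.
have alpha_neq0 := prim_root_neq0 alpha_prim.
have alpha_i_neq0 : alpha ^+ i != 0 by rewrite expf_neq0.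
have alpha_e_neq0 : alpha ^ (i%:Z * e) != 0 by rewrite expfz_neq0.
have gamma_alpha_i : gamma i * alpha ^+ i = (beta ^+ kappa)^-1 by rewrite mulfVK.
have f_root : (scalex f (alpha ^+ i)).[gamma i] = 0.
  by rewrite horner_scalex gamma_alpha_i horner_locf_root.
have other_f_neq0 : \prod_(l in Err | l != i) f.[gamma i * alpha ^+ l] != 0.
  by apply/prodf_neq0 => l /andP[_]; apply: horner_locf_prim_root_neq0.
have h_neq0 : h.[gamma i * alpha ^+ i] != 0.
  by rewrite gamma_alpha_i horner_loch_root_neq0 //; move: kappaZ; rewrite Z_supp inE.
have df_neq0 : (f^`()).[gamma i * alpha ^+ i] != 0.
  by rewrite gamma_alpha_i horner_deriv_locf_root_neq0.
have Omega_at : Omega.[gamma i] = in_alg K (ev i) * alpha ^ (i%:Z * e) *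
    (h.[gamma i * alpha ^+ i] * \prod_(l in Err | l != i) f.[gamma i * alpha ^+ l]).
  rewrite (horner_sum_prod_root _ _ iErr) // horner_scalex.
  by under eq_bigr do rewrite horner_scalex.
have Lambda'_at : (Lambda^`()).[gamma i] = alpha ^+ i *
    (f^`()).[gamma i * alpha ^+ i] * \prod_(l in Err | l != i) f.[gamma i * alpha ^+ l].
  rewrite (horner_deriv_prod_root iErr) // horner_deriv_scalex.
  by under eq_bigr do rewrite horner_scalex.
by rewrite Omega_at Lambda'_at; split; field;
  rewrite ?alpha_e_neq0 ?h_neq0 ?other_f_neq0 ?df_neq0 ?alpha_i_neq0.
Qed.
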